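(* Let $\mathfrak g$ be a real Lie algebra and $\mathfrak h\subset\mathfrak g$ a Lie subalgebra. Let $\mathfrak h^\perp:=\{f\in\mathfrak g^*\mid f(\mathfrak h)=0\}$, $r_{\mathfrak g,\mathfrak h}:=\min_{f\in\mathfrak h^\perp}\dim\mathfrak g_f$, and $\mathfrak h^\perp_{\min}:=\{f\in\mathfrak h^\perp\mid\dim\mathfrak g_f=r_{\mathfrak g,\mathfrak h}\}$. Then for every $f_0\in\mathfrak h^\perp_{\min}$ one has $[\mathfrak g_{f_0},\mathfrak g_{f_0}]\subset\mathfrak h_{f_0}$.
   Context: $\mathfrak g$ acts on $\mathfrak g^*$ by the coadjoint action; $\mathfrak g_f:=\{Y\in\mathfrak g\mid Yf=0\}$ is the stabilizer of $f$ in $\mathfrak g$ and $\mathfrak h_f:=\mathfrak g_f\cap\mathfrak h$. *)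

From HB Require Import structures.
From mathcomp Require Import all_boot all_order all_algebra.
From mathcomp Require Import reals.
Set Implicit Arguments. Unset Strict Implicit. Unset Printing Implicit Defensive.
Import GRing.Theory.
Local Open Scope ring_scope.

(* A finite-dimensional real Lie algebra: a vectType V over R : realType,
   with a bracket br : 'Hom(V, 'End(V)) (so br is bilinear by construction),
   [x, y] := br x y. *)
Definition is_lie_bracket (R : realType) (V : vectType R) (br : 'Hom(V, 'End(V))) :=
  (forall x : V, br x x = 0) /\
  (forall x y z : V, br x (br y z) + br y (br z x) + br z (br x y) = 0).

Definition is_subalgebra (R : realType) (V : vectType R) (br : 'Hom(V, 'End(V)))
  (h : {vspace V}) := forall x y, x \in h -> y \in h -> br x y \in h.

(* g^* is 'Hom(V, R^o). Coadjoint action: (Y.f)(X) = - f([Y,X]); the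
   stabilizer g_f = {Y | Y.f = 0} is the kernel of Y |-> f \o ad Y. *)
Definition stab (R : realType) (V : vectType R) (br : 'Hom(V, 'End(V)))
  (f : 'Hom(V, R^o)) : {vspace V} :=
  lker (linfun (fun Y : V => (f \o br Y)%VF)).

Definition in_hperp (R : realType) (V : vectType R) (h : {vspace V})
  (f : 'Hom(V, R^o)) := forall x, x \in h -> f x = 0.

Definition in_hperp_min (R : realType) (V : vectType R) (br : 'Hom(V, 'End(V)))
  (h : {vspace V}) (f0 : 'Hom(V, R^o)) :=
  in_hperp h f0 /\
  forall f, in_hperp h f -> (\dim (stab br f0) <= \dim (stab br f))%N.

From HB Require Import structures.
From mathcomp Require Import all_boot all_order all_algebra.
From mathcomp Require Import reals zify.
Set Implicit Arguments. Unset Strict Implicit. Unset Printing Implicit Defensive.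
Import GRing.Theory Num.Theory.
Local Open Scope ring_scope.

(* Let f0 minimise dim g_f over h^perp and Y, Z in g_f0.
   - By Jacobi, f0([[Y,Z],X]) = f0([Y,[Z,X]]) - f0([Z,[Y,X]]) = 0, so [Y,Z]
     lies in g_f0; only membership in h is at stake.
   - Write a = ad*(f0), c = ad*(phi) : g -> g^* (W |-> f(ad W)).  If [Y,Z] were
     not in h, a functional phi vanishing on h with phi([Y,Z]) <> 0 exists.
     Then Y is in ker a, while c Y is not in im a: c Y takes the value
     phi([Y,Z]) <> 0 at Z, whereas every element a W of im a vanishes at Z.
   - Pencil lemma: if a y = 0 and c y is not in im a, then for some t the map
     a + t c has a strictly smaller kernel.  Since g_(f0 + t phi) = ker(a + t c)
     and f0 + t phi is in h^perp, this contradicts the minimality of f0. *)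

(* For any square matrix B over a field of characteristic 0 there is t <> 0
   such that 1 + t B is nonsingular (acting on row vectors): among the m + 1
   numbers -1, ..., -(m+1) some -(k+1) is not an eigenvalue; take t = 1/(k+1). *)
Lemma nonsingular_shift (K : numFieldType) m (B : 'M[K]_m) :
  exists2 t : K, t != 0 & forall v : 'rV_m, v + t *: (v *m B) = 0 -> v = 0.
Proof.
set rs := [seq - (k.+1)%:R : K | k <- iota 0 m.+1].
have /allPn [s /mapP [k _ ->] not_root] : ~~ all (root (char_poly B)) rs.
  apply/negP => all_roots.
  have uniq_rs : uniq rs.
    rewrite map_inj_uniq ?iota_uniq // => i j /eqP.
    by rewrite eqr_opp eqr_nat eqSS => /eqP.
  have := max_poly_roots (monic_neq0 (char_poly_monic B)) all_roots uniq_rs.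
  by rewrite size_char_poly size_map size_iota ltnn.
have k1_neq0 : (k.+1%:R : K) != 0 by rewrite pnatr_eq0.
exists (k.+1%:R)^-1 => [|v v_eq]; first by rewrite invr_eq0.
apply: contraNeq not_root => v_neq0.
rewrite -eigenvalue_root_char; apply/eigenvalueP; exists v => //.
have : k.+1%:R *: ((k.+1%:R)^-1 *: (v *m B)) = k.+1%:R *: - v.
  by rewrite -[_ *: (v *m B)](addKr v) v_eq addr0.
by rewrite scalerA mulfV // scale1r scalerN scaleNr.
Qed.

(* A free family stays free under a suitable nonzero perturbation in any
   direction g: the coordinates of a relation among the E_i + t g_i on E form
   a row vector k with k + t k C = 0, where C is the coordinate matrix of g. *)
Lemma free_perturb (K : numFieldType) (W : vectType K) n (E : n.-tuple W)
    (g : 'I_n -> W) :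
  free E -> exists2 t : K, t != 0 & free [tuple E`_i + t *: g i | i < n].
Proof.
move=> freeE.
pose C : 'M[K]_n := \matrix_(i, j) coord E j (g i).
have [t t_neq0 shift_inj] := nonsingular_shift C.
exists t => //; apply/freeP => k krel i.
suff /shift_inj/rowP/(_ i) : \row_i k i + t *: (\row_i k i *m C) = 0.
  by rewrite !mxE.
have split_sum : \sum_(l < n) k l *: [tuple E`_i + t *: g i | i < n]`_l
    = \sum_(l < n) k l *: E`_l + t *: \sum_(l < n) k l *: g l.
  rewrite scaler_sumr -big_split; apply: eq_bigr => l _.
  by rewrite nth_mktuple scalerDr !scalerA mulrC.
apply/rowP => j; rewrite !mxE; under eq_bigr do rewrite !mxE.
have := congr1 (coord E j) krel.
rewrite split_sum linear0 linearD linearZ /= coord_sum_free // linear_sum.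
move=> coord_rel; rewrite -[RHS]coord_rel; congr (_ + _ * _).
by apply: eq_bigr => l _; rewrite linearZ.
Qed.

Lemma lker_dim_lt (K : fieldType) (V W : vectType K) (a b : 'Hom(V, W)) :
  (\dim (limg a) < \dim (limg b))%N -> (\dim (lker b) < \dim (lker a))%N.
Proof.
have := limg_ker_dim a fullv; have := limg_ker_dim b fullv.
rewrite !capfv; lia.
Qed.

(* Indeed, with (u_i) a basis of im a,
   the family (c y, u_i + t c(a^-1 u_i)) lies in im (a + t c) and is free for
   a suitable t by free_perturb. *)
Lemma pencil_lker_drop (K : numFieldType) (V W : vectType K) (a c : 'Hom(V, W))
    (y : V) :
  y \in lker a -> c y \notin limg a ->
  exists t : K, (\dim (lker (a + t *: c)%R) < \dim (lker a))%N.
Proof.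
move=> y_ker cy_notin; have ay_eq0 : a y = 0 by apply/eqP; rewrite -memv_ker.
set r := \dim (limg a).
have /andP [/eqP span_basis free_basis] := vbasisP (limg a).
pose E : r.+1.-tuple W := [tuple of c y :: vbasis (limg a)].
have freeE : free E by rewrite free_cons /= span_basis cy_notin.
pose g (i : 'I_r.+1) : W :=
  if unlift ord0 i is Some j then c (a^-1%VF (vbasis (limg a))`_j) else 0.
have [t t_neq0 freeG] := free_perturb g freeE.
exists t; apply: lker_dim_lt.
have <- : size [tuple E`_i + t *: g i | i < r.+1] = r.+1 by rewrite size_tuple.
rewrite -(eqP freeG); apply/dimvS/span_subvP => _ /tnthP [i ->].
rewrite tnth_mktuple /g; case: unliftP => [j -> | ->] /=; last first.
  rewrite scaler0 addr0.
  have -> : c y = (a + t *: c) (t^-1 *: y).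
    by rewrite add_lfunE scale_lfunE !linearZ /= ay_eq0 scaler0 add0r
      scalerA mulVf // scale1r.
  exact: memv_img (memvf _).
have uj_img : (vbasis (limg a))`_j \in limg a.
  by apply: vbasis_mem; rewrite mem_nth // size_tuple.
rewrite -[X in X + _](limg_lfunVK uj_img) -scale_lfunE -add_lfunE.
exact: memv_img (memvf _).
Qed.

(* A vector outside a subspace U is separated from U by a linear functional:
   the first coordinate with respect to a basis (v, basis of U). *)
Lemma separating_functional (K : fieldType) (V : vectType K) (U : {vspace V})
    (v : V) :
  v \notin U -> exists2 phi : 'Hom(V, K^o),
    (forall x, x \in U -> phi x = 0) & phi v != 0.
Proof.
move=> v_notin.
have /andP [/eqP span_basis free_basis] := vbasisP U.
pose E : (\dim U).+1.-tuple V := [tuple of v :: vbasis U].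
have freeE : free E by rewrite free_cons /= span_basis v_notin.
exists (linfun (coord E ord0 : V -> K^o)) => [x xU | ];
  rewrite (lfunE (coord E ord0 : {linear V -> K^o})) /=; last first.
  by rewrite (coord_free ord0 ord0 freeE) eqxx oner_neq0.
rewrite (coord_span (_ : x \in <<vbasis U>>%VS)) ?span_basis // linear_sum.
apply: big1 => j _; rewrite linearZ /=.
have -> : (vbasis U)`_j = E`_(lift ord0 j) by [].
by rewrite (coord_free _ _ freeE) eq_sym (negbTE (neq_lift _ _)) mulr0.
Qed.

Section Coadjoint.
Variables (R : realType) (V : vectType R) (br : 'Hom(V, 'End(V))).

Definition coad (f : 'Hom(V, R^o)) (W : V) : 'Hom(V, R^o) := (f \o br W)%VF.

Lemma coad_is_linear (f : 'Hom(V, R^o)) : linear (coad f).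
Proof.
by move=> k x y; rewrite /coad linearD linearZ /= comp_lfunDr -comp_lfunZr.
Qed.

HB.instance Definition _ (f : 'Hom(V, R^o)) :=
  GRing.isLinear.Build R V 'Hom(V, R^o) *:%R (coad f) (coad_is_linear f).

Lemma stabE (f : 'Hom(V, R^o)) : stab br f = lker (linfun (coad f)).
Proof. by []. Qed.

Lemma coadE (f : 'Hom(V, R^o)) (W X : V) : linfun (coad f) W X = f (br W X).
Proof. by rewrite lfunE /coad comp_lfunE. Qed.

Lemma memv_stab (f : 'Hom(V, R^o)) (W : V) :
  W \in stab br f <-> (forall X, f (br W X) = 0).
Proof.
rewrite stabE memv_ker; split.
  by move=> /eqP W_ker X; rewrite -coadE W_ker zero_lfunE.
by move=> W_stab; apply/eqP/lfunP => X; rewrite coadE W_stab zero_lfunE.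
Qed.

Lemma stab_pencil (f phi : 'Hom(V, R^o)) (t : R) :
  stab br (f + t *: phi) = lker (linfun (coad f) + t *: linfun (coad phi)).
Proof.
rewrite stabE; congr (lker _); apply/lfunP => W; apply/lfunP => X.
by rewrite !add_lfunE !scale_lfunE !coadE add_lfunE scale_lfunE.
Qed.

Hypothesis br_lie : is_lie_bracket br.

(* The bracket is antisymmetric, since [x + y, x + y] = 0. *)
Lemma bracket_anti (x y : V) : br x y = - br y x.
Proof.
have [br_alt _] := br_lie; apply/eqP; rewrite -addr_eq0.
have := br_alt (x + y); rewrite !linearD /= !add_lfunE !br_alt add0r addr0.
by rewrite addrC => ->.
Qed.

(* g_f is a subalgebra, by the Jacobi identity. *)
Lemma stab_bracket (f : 'Hom(V, R^o)) (Y Z : V) :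
  Y \in stab br f -> Z \in stab br f -> br Y Z \in stab br f.
Proof.
move=> /memv_stab Y_stab /memv_stab Z_stab; apply/memv_stab => X.
have [_ jacobi] := br_lie.
have := congr1 f (jacobi X Y Z).
rewrite !linearD /= Y_stab Z_stab linear0 !addr0 => f_XYZ.
by rewrite (bracket_anti (br Y Z)) linearN /= f_XYZ oppr0.
Qed.

(* If Z is in g_f and phi([Y,Z]) <> 0, then ad*(phi) Y is not in the image
   of ad*(f): it does not vanish at Z, while every f o ad W does. *)
Lemma coad_notin_limg (f phi : 'Hom(V, R^o)) (Y Z : V) :
  Z \in stab br f -> phi (br Y Z) != 0 ->
  linfun (coad phi) Y \notin limg (linfun (coad f)).
Proof.
move=> /memv_stab Z_stab phiYZ; apply: contra phiYZ => /memv_imgP [W _ eqW].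
by rewrite -coadE eqW coadE bracket_anti linearN /= Z_stab oppr0.
Qed.

End Coadjoint.

Theorem lemma2p12 (R : realType) (V : vectType R) (br : 'Hom(V, 'End(V)))
  (h : {vspace V}) :
  is_lie_bracket br -> is_subalgebra br h ->
  forall f0 : 'Hom(V, R^o), in_hperp_min br h f0 ->
  forall Y Z : V, Y \in stab br f0 -> Z \in stab br f0 ->
    br Y Z \in (stab br f0 :&: h)%VS.
Proof.
move=> br_lie _ f0 [f0_perp f0_min] Y Z Y_stab Z_stab.
rewrite memv_cap stab_bracket //=; apply: contraT => YZ_notin_h.
have [phi phi_perp phiYZ] := separating_functional YZ_notin_h.
have cY_notin := coad_notin_limg br_lie Z_stab phiYZ.
have [t drop] := pencil_lker_drop Y_stab cY_notin.
have perp_t : in_hperp h (f0 + t *: phi).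
  by move=> x xh; rewrite add_lfunE scale_lfunE f0_perp // phi_perp // scaler0 addr0.
by have := f0_min _ perp_t; rewrite stab_pencil leqNgt drop.
Qed.
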